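(* Let $m\ge 2$, $n=n_1+\cdots+n_r$, and let $\mathcal{A},\mathcal{B}$ be real $m$-th order $n$-dimensional tensors such that $\mathcal{A}x^m\neq 0$ for every $x\in\mathcal{K}\setminus\{0\}$. Define $\lambda(x)=\mathcal{B}x^m/\mathcal{A}x^m$ and $F(x)=\lambda(x)\mathcal{A}x^{m-1}-\mathcal{B}x^{m-1}$ for $x\in\mathcal{K}\setminus\{0\}$. If $\bar x\in\mathcal{K}_0$ satisfies $$F(\bar x)^\top(z-\bar x)\ge 0\quad\text{for all } z\in\mathcal{K}_0,$$ then $(\bar x,\lambda(\bar x))$ is a solution of the second-order cone tensor eigenvalue complementarity problem, i.e. $\bar x\neq 0$, $\bar x\in\mathcal{K}$, $\bar w:=(\lambda(\bar x)\mathcal{A}-\mathcal{B})\bar x^{m-1}\in\mathcal{K}$ and $\langle \bar x,\bar w\rangle=0$.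
   Context: A real $m$-th order $n$-dimensional tensor is an array $\mathcal{A}=(a_{i_1\ldots i_m})$, $a_{i_1\ldots i_m}\in\mathbb{R}$, $1\le i_1,\ldots,i_m\le n$. For $x\in\mathbb{R}^n$, $\mathcal{A}x^{m-1}\in\mathbb{R}^n$ has $i$-th component $\sum_{i_2,\ldots,i_m=1}^n a_{ii_2\ldots i_m}x_{i_2}\cdots x_{i_m}$, and $\mathcal{A}x^m=\sum_{i_1,\ldots,i_m=1}^n a_{i_1\ldots i_m}x_{i_1}\cdots x_{i_m}$. Vectors $x\in\mathbb{R}^n$ are written $x=(x^1,\ldots,x^r)\in\mathbb{R}^{n_1}\times\cdots\times\mathbb{R}^{n_r}$ with $x^i=(x^i_\circ,x^i_\bullet)\in\mathbb{R}\times\mathbb{R}^{n_i-1}$. The second-order cone is $\mathcal{K}=\mathcal{K}^{n_1}\times\cdots\times\mathcal{K}^{n_r}$ with $\mathcal{K}^{n_i}=\{x^i\in\mathbb{R}^{n_i}: x^i_\circ\ge\|x^i_\bullet\|\}$ (Euclidean norm); $\mathcal{K}$ is self-dual. Let $e=(e^1,\ldots,e^r)$ with $e^i=(1,0,\ldots,0)^\top\in\mathbb{R}^{n_i}$ and $\mathcal{K}_0=\{x\in\mathcal{K}: e^\top x=1\}$. *)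

From HB Require Import structures.
From mathcomp Require Import all_boot all_order all_algebra.
From mathcomp Require Import reals.
Set Implicit Arguments. Unset Strict Implicit. Unset Printing Implicit Defensive.
Import Order.TTheory GRing.Theory Num.Theory.
Local Open Scope ring_scope.

(* A real m-th order n-dimensional tensor: a real entry for every
   index tuple (i_1,...,i_m), encoded as a finite function 'I_m -> 'I_n. *)
Definition tensor (R : Type) (m n : nat) := {ffun 'I_m -> 'I_n} -> R.

Section Defs.
Variable R : realType.

Definition tpow (m n : nat) (A : tensor R m n) (x : 'rV[R]_n) : R :=
  \sum_(idx : {ffun 'I_m -> 'I_n}) A idx * \prod_(k : 'I_m) x 0 (idx k).

(* A x^(m-1): i-th component sums over idx with first index i_1 = i,
   multiplying x over the remaining m-1 indices. *)
Definition tpow1 (m n : nat) (A : tensor R m n) (x : 'rV[R]_n) : 'rV[R]_n :=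
  \row_(i < n) \sum_(idx : {ffun 'I_m -> 'I_n} |
                       [forall k : 'I_m, (val k == 0%N) ==> (idx k == i)])
      A idx * \prod_(k : 'I_m | val k != 0%N) x 0 (idx k).

Definition tcomb (m n : nat) (lam : R) (A B : tensor R m n) : tensor R m n :=
  fun idx => lam * A idx - B idx.

(* first component x_o of a block vector (0 if the block is empty) *)
Definition blk_head (k : nat) (v : 'rV[R]_k) : R :=
  \sum_(j : 'I_k | val j == 0%N) v 0 j.

Definition in_soc (k : nat) (v : 'rV[R]_k) : Prop :=
  Num.sqrt (\sum_(j : 'I_k | val j != 0%N) v 0 j ^+ 2) <= blk_head v.

Definition in_K (r : nat) (ns : 'I_r -> nat) (x : 'rV[R]_(\sum_(i < r) ns i)) : Prop :=
  forall i : 'I_r, in_soc (submxrow x i).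

Definition eTx (r : nat) (ns : 'I_r -> nat) (x : 'rV[R]_(\sum_(i < r) ns i)) : R :=
  \sum_(i < r) blk_head (submxrow x i).

Definition in_K0 (r : nat) (ns : 'I_r -> nat) (x : 'rV[R]_(\sum_(i < r) ns i)) : Prop :=
  in_K x /\ eTx x = 1.

Definition dotv (n : nat) (x y : 'rV[R]_n) : R := \sum_(j < n) x 0 j * y 0 j.

End Defs.

Arguments in_K {R r} ns x.
Arguments eTx {R r} ns x.
Arguments in_K0 {R r} ns x.

(* Euler's identity <x, A x^(m-1)> = A x^m makes <xbar, wbar> = lam(xbar) A xbar^m - B xbar^m
   vanish, so the variational inequality says <wbar, z> >= 0 for every z in K_0.  Testing it
   against the point of K_0 that is (1, -w_bullet / ||w_bullet||) on block i and 0 elsewhere gives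
   w_o - ||w_bullet|| >= 0 on block i, i.e. wbar lies in K (self-duality of the cone). *)
From HB Require Import structures.
From mathcomp Require Import all_boot all_order all_algebra.
From mathcomp Require Import reals.
Import Order.TTheory GRing.Theory Num.Theory.
Set Implicit Arguments. Unset Strict Implicit.
Local Open Scope ring_scope.

Section SecondOrderCone.
Variable R : realType.

Lemma dotvC n (x y : 'rV[R]_n) : dotv x y = dotv y x.
Proof. by apply: eq_bigr => j _; rewrite mulrC. Qed.

Lemma dotvBr n (x y z : 'rV[R]_n) : dotv x (y - z) = dotv x y - dotv x z.
Proof. by rewrite /dotv -sumrB; apply: eq_bigr => j _; rewrite !mxE mulrBr. Qed.

Lemma dotvZr n (x y : 'rV[R]_n) a : dotv x (a *: y) = a * dotv x y.
Proof. by rewrite /dotv mulr_sumr; apply: eq_bigr => j _; rewrite mxE mulrCA. Qed.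

Lemma dotv0r n (x : 'rV[R]_n) : dotv x 0 = 0.
Proof. by rewrite /dotv big1 // => j _; rewrite mxE mulr0. Qed.

Lemma dotvE n (x y : 'rV[R]_n) : dotv x y = (x *m y^T) 0 0.
Proof. by rewrite /dotv !mxE; apply: eq_bigr => j _; rewrite !mxE. Qed.

Lemma dotv_submxrow r (ns : 'I_r -> nat) (x y : 'rV[R]_(\sum_(i < r) ns i)) :
  dotv x y = \sum_(i < r) dotv (submxrow x i) (submxrow y i).
Proof.
rewrite dotvE -[x]submxrowK -[y]submxrowK tr_mxrow mul_mxrow_mxcol summxE.
by apply: eq_bigr => i _; rewrite dotvE !mxrowK.
Qed.

Lemma tpow1_tcomb m n lam (A B : tensor R m n) x :
  tpow1 (tcomb lam A B) x = lam *: tpow1 A x - tpow1 B x.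
Proof.
apply/rowP => i; rewrite !mxE mulr_sumr -sumrB; apply: eq_bigr => idx _.
by rewrite /tcomb mulrBl mulrA.
Qed.

Lemma dotv_tpow1 m n (A : tensor R m n) x : (0 < m)%N ->
  dotv x (tpow1 A x) = tpow A x.
Proof.
move=> m_gt0; set k0 : 'I_m := Ordinal m_gt0.
have first_idx i (idx : {ffun 'I_m -> 'I_n}) :
    [forall k : 'I_m, (val k == 0%N) ==> (idx k == i)] = (idx k0 == i).
  apply/forallP/idP => [/(_ k0)/implyP-> // | /eqP <- k].
  by apply/implyP => /eqP k_0; have -> : k = k0 by apply/val_inj.
rewrite /dotv /tpow.
under eq_bigr => i _ do
  rewrite mxE (eq_bigl _ _ (first_idx i)) big_mkcond mulr_sumr /=.
rewrite exchange_big /=; apply: eq_bigr => idx _.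
rewrite (bigD1 (idx k0)) //= eqxx [X in _ + X]big1 ?addr0; last first.
  by move=> i /negbTE; rewrite eq_sym => ->; rewrite mulr0.
by rewrite (bigD1 k0 (P := predT)) //= mulrCA.
Qed.

Lemma blk_head0 k : blk_head (0 : 'rV[R]_k) = 0.
Proof. by rewrite /blk_head big1 // => j _; rewrite mxE. Qed.

Lemma in_soc0 k : in_soc (0 : 'rV[R]_k).
Proof.
rewrite /in_soc blk_head0 big1 ?sqrtr0 // => j _.
by rewrite mxE expr0n.
Qed.

Definition soc_tail k (v : 'rV[R]_k) : R := \sum_(j < k | val j != 0%N) v 0 j ^+ 2.

Lemma soc_tail_ge0 k (v : 'rV[R]_k) : 0 <= soc_tail v.
Proof. by apply: sumr_ge0 => j _; rewrite sqr_ge0. Qed.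

(* The minimiser of <v, .> over the base {u in K^k : u_o = 1} of the cone;
   when v_bullet = 0 the division by 0 returns 0 and the point is e. *)
Definition soc_argmin k (v : 'rV[R]_k) : 'rV[R]_k :=
  \row_j (if val j == 0%N then 1 else - (v 0 j / Num.sqrt (soc_tail v))).

Lemma blk_head_soc_argmin k (v : 'rV[R]_k) : (0 < k)%N -> blk_head (soc_argmin v) = 1.
Proof.
move=> k_gt0; have head_eq (j : 'I_k) : (val j == 0%N) = (j == Ordinal k_gt0).
  by rewrite -(inj_eq val_inj).
by rewrite /blk_head (eq_bigl _ _ head_eq) big_pred1_eq mxE.
Qed.

Lemma in_soc_argmin k (v : 'rV[R]_k) : (0 < k)%N -> in_soc (soc_argmin v).
Proof.
move=> k_gt0; rewrite /in_soc blk_head_soc_argmin //.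
have -> : \sum_(j < k | val j != 0%N) soc_argmin v 0 j ^+ 2
          = soc_tail v / Num.sqrt (soc_tail v) ^+ 2.
  rewrite /soc_tail mulr_suml; apply: eq_bigr => j /negbTE j_tail.
  by rewrite mxE j_tail sqrrN expr_div_n.
rewrite sqr_sqrtr ?soc_tail_ge0 //.
have [->|tail_neq0] := eqVneq (soc_tail v) 0; first by rewrite mul0r sqrtr0 ler01.
by rewrite divff // sqrtr1.
Qed.

Lemma dotv_soc_argmin k (v : 'rV[R]_k) : (0 < k)%N ->
  dotv v (soc_argmin v) = blk_head v - Num.sqrt (soc_tail v).
Proof.
move=> k_gt0; have tail_div : soc_tail v / Num.sqrt (soc_tail v) = Num.sqrt (soc_tail v).
  have [->|tail_neq0] := eqVneq (soc_tail v) 0; first by rewrite sqrtr0 mul0r.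
  have sqrt_neq0 : Num.sqrt (soc_tail v) != 0.
    by rewrite sqrtr_eq0 -ltNge lt_def tail_neq0 soc_tail_ge0.
  by rewrite -{1}(sqr_sqrtr (soc_tail_ge0 v)) expr2 mulfK.
rewrite /dotv (bigID (fun j : 'I_k => val j == 0%N)) /=; congr (_ + _).
  by apply: eq_bigr => j j_head; rewrite mxE j_head mulr1.
rewrite -tail_div /soc_tail mulr_suml -sumrN; apply: eq_bigr => j /negbTE j_tail.
by rewrite mxE j_tail mulrN mulrA expr2.
Qed.

Lemma in_socE k (v : 'rV[R]_k) : (0 < k)%N ->
  in_soc v <-> 0 <= dotv v (soc_argmin v).
Proof. by move=> k_gt0; rewrite dotv_soc_argmin // subr_ge0. Qed.

Section Blocks.
Variables (r : nat) (ns : 'I_r -> nat).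

Definition blk_only (i : 'I_r) (U : forall j, 'rV[R]_(ns j)) : 'rV[R]_(\sum_(j < r) ns j) :=
  mxrow (fun j => if j == i then U j else 0).

Lemma submxrow_blk_only i U j :
  submxrow (blk_only i U) j = if j == i then U j else 0.
Proof. exact: mxrowK. Qed.

Lemma dotv_blk_only x i U : dotv x (blk_only i U) = dotv (submxrow x i) (U i).
Proof.
rewrite dotv_submxrow (bigD1 i) //= submxrow_blk_only eqxx big1 ?addr0 //.
by move=> j /negbTE j_neq_i; rewrite submxrow_blk_only j_neq_i dotv0r.
Qed.

Lemma eTx_blk_only i U : eTx ns (blk_only i U) = blk_head (U i).
Proof.
rewrite /eTx (bigD1 i) //= submxrow_blk_only eqxx big1 ?addr0 //.
by move=> j /negbTE j_neq_i; rewrite submxrow_blk_only j_neq_i blk_head0.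
Qed.

Lemma in_K_blk_only i U : in_soc (U i) -> in_K ns (blk_only i U).
Proof.
move=> Ui_soc j; rewrite submxrow_blk_only.
by case: eqP => [-> | _]; [exact: Ui_soc | exact: in_soc0].
Qed.

Lemma eTx0 : eTx ns (0 : 'rV[R]_(\sum_(i < r) ns i)) = 0.
Proof. by rewrite /eTx big1 // => i _; rewrite submxrow0 blk_head0. Qed.

Lemma in_K0_neq0 (x : 'rV[R]_(\sum_(i < r) ns i)) : in_K0 ns x -> x != 0.
Proof. by case=> _ eTx1; apply: contra_eq_neq eTx1 => ->; rewrite eTx0 eq_sym oner_neq0. Qed.

Lemma in_K_dual (w : 'rV[R]_(\sum_(i < r) ns i)) : (forall i, (0 < ns i)%N) ->
  (forall z, in_K0 ns z -> 0 <= dotv w z) -> in_K ns w.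
Proof.
move=> ns_gt0 w_dual i; apply/in_socE => //.
pose z := blk_only i (fun j => soc_argmin (submxrow w j)).
have z_K0 : in_K0 ns z.
  split; first exact/in_K_blk_only/in_soc_argmin.
  by rewrite eTx_blk_only blk_head_soc_argmin.
by have := w_dual z z_K0; rewrite dotv_blk_only.
Qed.

End Blocks.

End SecondOrderCone.

Unset Implicit Arguments.
Theorem theorem1 (R : realType) (m r : nat) (ns : 'I_r -> nat)
  (A B : tensor R m (\sum_(i < r) ns i)) :
  (2 <= m)%N ->
  (forall i, (0 < ns i)%N) ->
  (forall x : 'rV[R]_(\sum_(i < r) ns i), in_K ns x -> x != 0 -> tpow A x != 0) ->
  let lam := fun x => tpow B x / tpow A x in
  let F := fun x => lam x *: tpow1 A x - tpow1 B x in
  forall xbar : 'rV[R]_(\sum_(i < r) ns i),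
    in_K0 ns xbar ->
    (forall z, in_K0 ns z -> 0 <= dotv (F xbar) (z - xbar)) ->
    let wbar := tpow1 (tcomb (lam xbar) A B) xbar in
    [/\ xbar != 0, in_K ns xbar, in_K ns wbar & dotv xbar wbar = 0].
Proof.
move=> m_ge2 ns_gt0 A_nz lam F xbar xbar_K0 VI wbar.
have m_gt0 : (0 < m)%N by apply: leq_trans m_ge2.
have xbar_neq0 := in_K0_neq0 xbar_K0.
have wbarE : wbar = F xbar by rewrite /wbar tpow1_tcomb.
have compl : dotv xbar wbar = 0.
  have Axbar_neq0 : tpow A xbar != 0 by apply: A_nz => //; case: xbar_K0.
  by rewrite wbarE dotvBr dotvZr !dotv_tpow1 // /lam divfK // subrr.
split=> //; first by case: xbar_K0.
apply: in_K_dual => // z z_K0.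
by have := VI z z_K0; rewrite -wbarE dotvBr [dotv wbar xbar]dotvC compl subr0.
Qed.
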